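(* If $\pi$ is a Fishburn permutation, then $\upsilon(\pi)=\tilde\upsilon(\pi)$.
   Context: A permutation $\pi$ of $[n]$ is Fishburn if there are no indices $i$ and $k>i+1$ with $\pi(i)<\pi(i+1)$ and $\pi(k)=\pi(i)-1$. For $i\in[n]$ let $J(i)=0$ if $\pi(i)=1$, and otherwise let $J(i)$ be the index with $\pi(J(i))=\pi(i)-1$. The sites of $\pi$ are the site before $\pi(1)$ and the site after $\pi(i)$ for each $i\in[n]$. Fishburn-active sites: the site before $\pi(1)$ is active, and the site after $\pi(i)$ is active iff $J(i)<i$. $\eta$-active sites: the site before $\pi(1)$ is $\eta$-active, and the site after $\pi(i)$ is $\eta$-active iff $J(i)<i$, or $i<n$ and $\pi(i)<\pi(i+1)$. $\upsilon(\pi)$ (resp. $\tilde\upsilon(\pi)$) is the word of length $n$ whose $j$-th letter is the number of Fishburn-active (resp. $\eta$-active) sites to the left of $\pi(j)$. *)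

(* Permutations of [n] are modelled as {perm 'I_n}:
   positions and values are 0-based (paper's position i / value v
   correspond to i-1 / v-1 here). *)
From mathcomp Require Import all_boot all_fingroup.
Set Implicit Arguments.
Unset Strict Implicit.
Unset Printing Implicit Defensive.

Definition fishburn (n : nat) (p : {perm 'I_n}) : Prop :=
  ~ exists (i i1 k : 'I_n),
      [/\ val i1 = (val i).+1, (val i).+1 < val k,
          val (p i) < val (p i1) & (val (p k)).+1 = val (p i)].

(* J(i): None encodes J(i) = 0 (i.e. pi(i) is the minimal value);
   Some k encodes the position k with pi(k) = pi(i) - 1. *)
Definition Jidx (n : nat) (p : {perm 'I_n}) (i : 'I_n) : option 'I_n :=
  [pick k : 'I_n | (val (p k)).+1 == val (p i)].

(* J(i) < i  (J(i) = 0 is below every position). *)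
Definition J_lt (n : nat) (p : {perm 'I_n}) (i : 'I_n) : bool :=
  match Jidx p i with None => true | Some k => val k < val i end.

Definition fish_active (n : nat) (p : {perm 'I_n}) (i : 'I_n) : bool :=
  J_lt p i.

Definition eta_active (n : nat) (p : {perm 'I_n}) (i : 'I_n) : bool :=
  J_lt p i ||
  [exists i1 : 'I_n, (val i1 == (val i).+1) && (val (p i) < val (p i1))].

(* number of active sites to the left of pi(j): the (always active) site
   before pi(1), plus the active sites after pi(i) for i < j. *)
Definition sites_left (n : nat) (act : 'I_n -> bool) (j : 'I_n) : nat :=
  1 + #|[set i : 'I_n | (val i < val j) && act i]|.

Definition upsilon (n : nat) (p : {perm 'I_n}) : seq nat :=
  [seq sites_left (fish_active p) j | j <- enum 'I_n].

Definition upsilon_tilde (n : nat) (p : {perm 'I_n}) : seq nat :=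
  [seq sites_left (eta_active p) j | j <- enum 'I_n].

From mathcomp Require Import all_boot all_fingroup.
From mathcomp Require Import zify.

Set Implicit Arguments.
Unset Strict Implicit.
Unset Printing Implicit Defensive.

(* The two notions of activity differ only at an ascent pi(i) < pi(i+1) with
   J(i) > i.  Then J(i) is neither i nor i+1 (its value is pi(i) - 1), so
   J(i) > i+1, which is exactly the pattern forbidden in a Fishburn
   permutation. *)

Section Activity.

Variables (n : nat) (p : {perm 'I_n}).

Lemma fishburn_ascent_J_lt (i i1 : 'I_n) :
  fishburn p -> val i1 = (val i).+1 -> val (p i) < val (p i1) -> J_lt p i.
Proof.
move=> Fp Hi1 Hasc; rewrite /J_lt /Jidx.
case: pickP => // k /eqP Hk; rewrite ltnNge; apply/negP => Hik.
apply: Fp; exists i, i1, k; split => //.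
have k_neq_i : val k <> val i by move=> /val_inj Eki; rewrite Eki in Hk; lia.
have k_neq_i1 : val k <> val i1 by move=> /val_inj Eki1; rewrite -Eki1 in Hasc; lia.
simpl in *; lia.
Qed.

Lemma fishburn_eta_activeE : fishburn p -> eta_active p =1 fish_active p.
Proof.
move=> Fp i; rewrite /eta_active /fish_active.
case: (boolP (J_lt p i)) => //= notJ.
apply/existsP => -[i1 /andP [/eqP Hi1 Hasc]].
by rewrite (fishburn_ascent_J_lt Fp Hi1 Hasc) in notJ.
Qed.

End Activity.

Lemma eq_sites_left (n : nat) (act act' : 'I_n -> bool) :
  act =1 act' -> sites_left act =1 sites_left act'.
Proof.
by move=> Eact j; rewrite /sites_left; congr (1 + _); apply: eq_card => i; rewrite !inE Eact.
Qed.

Theorem lemma7p1 (n : nat) (p : {perm 'I_n}) :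
  fishburn p -> upsilon p = upsilon_tilde p.
Proof.
move=> Fp; apply: eq_map => j.
exact/esym/eq_sites_left/fishburn_eta_activeE.
Qed.
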